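(* Let $P$ be a non-centered \textsf{Z}-convex polyomino which is descending. Let $c_1$ be the leftmost column of $P$, let $X$ be the row of $P$ containing the top cell of $c_1$ and $Y$ the row containing the bottom cell of $c_1$. Let $S$ be the column of $P$ containing the rightmost cell of $X$, and $T$ the column of $P$ containing the rightmost cell of $Y$. Let $\theta$ be the set of cells of $P$ lying in columns strictly to the right of $T$. Then $\theta$ contains no cell lower than the lowest cell of $P$ in the column $S$.
   Context: A cell is a unit square of $\mathbb Z\times\mathbb Z$; a polyomino is a finite connected union of cells with no cut point. A polyomino is convex if its intersection with every vertical and every horizontal line of cells is connected; a convex polyomino is centered if some row touches both the left and right sides of its minimal bounding rectangle. A path in a polyomino is a self-avoiding sequence of unit steps $N,S,E,W$ between adjacent cells; it is monotone if it uses only two step types; a change of direction is a pair of consecutive distinct steps. A convex polyomino is \textsf{Z}-convex if every pair of its cells is connected by a monotone path with at most two changes of direction. For a non-centered convex polyomino with $c_1,X,Y$ as in the claim, its rightmost column lies entirely above $X$ or entirely below $Y$; it is called descending if its rightmost column lies entirely below the row $Y$. *)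

(* Cells of Z x Z are pairs (x, y) : int * int,
   x = column index (increasing to the East), y = row index (increasing to the North). *)
From HB Require Import structures.
From mathcomp Require Import all_boot all_order all_algebra.
From mathcomp Require Import finmap.
Set Implicit Arguments. Unset Strict Implicit. Unset Printing Implicit Defensive.
Import Order.TTheory GRing.Theory Num.Theory.
Local Open Scope ring_scope.
Local Open Scope fset_scope.

Definition cell := (int * int)%type.

Definition adj (a b : cell) : bool :=
  ((`|a.1 - b.1| + `|a.2 - b.2|)%N == 1%N).

(* the unit step from a to b, encoded as the displacement vector:
   N = (0,1), S = (0,-1), E = (1,0), W = (-1,0) *)
Definition step (a b : cell) : cell := (b.1 - a.1, b.2 - a.2).

Definition cell_path (P : {fset cell}) (a b : cell) (p : seq cell) : Prop :=
  [/\ path adj a p, all (fun c => c \in P) (a :: p) & last a p = b].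

Definition sa_path (P : {fset cell}) (a b : cell) (p : seq cell) : Prop :=
  cell_path P a b p /\ uniq (a :: p).

Definition steps (a : cell) (p : seq cell) : seq cell := pairmap step a p.

Definition monotone (a : cell) (p : seq cell) : bool :=
  (size (undup (steps a p)) <= 2)%N.

Definition nchanges (s : seq cell) : nat :=
  match s with
  | [::] => 0%N
  | x :: s' => count id (pairmap (fun u v => u != v) x s')
  end.

Definition polyomino (P : {fset cell}) : Prop :=
  P != fset0 /\
  forall a b, a \in P -> b \in P -> exists p, cell_path P a b p.

Definition convex_polyomino (P : {fset cell}) : Prop :=
  polyomino P /\
  (forall (y x1 x2 x : int), (x1, y) \in P -> (x2, y) \in P ->
       x1 <= x <= x2 -> (x, y) \in P) /\
  (forall (x y1 y2 y : int), (x, y1) \in P -> (x, y2) \in P ->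
       y1 <= y <= y2 -> (x, y) \in P).

Definition centered (P : {fset cell}) : Prop :=
  exists (y xl xr : int), [/\ (xl, y) \in P, (xr, y) \in P &
     forall c, c \in P -> xl <= c.1 <= xr].

Definition Z_convex (P : {fset cell}) : Prop :=
  convex_polyomino P /\
  forall a b, a \in P -> b \in P ->
    exists p, [/\ sa_path P a b p, monotone a p & (nchanges (steps a p) <= 2)%N].

(* A monotone path from the top cell of the leftmost column to a cell strictly
   south-east of it only uses East and South steps, so with at most two changes of
   direction it is an East-South-East or a South-East-South staircase whose corners
   lie in P; by convexity of rows and columns this gives either a column meeting both
   end rows or a row meeting both end columns inside P.  Applied once to the rightmost
   column, this shows that every cell right of T lies below Y; applied to a cell of
   theta below the bottom of S, both kinds of staircase force a cell that contradicts
   either the choice of S or this first fact. *)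
From HB Require Import structures.
From mathcomp Require Import all_boot all_order all_algebra.
From mathcomp Require Import finmap zify.
Set Implicit Arguments. Unset Strict Implicit. Unset Printing Implicit Defensive.
Import Order.TTheory GRing.Theory Num.Theory.
Local Open Scope ring_scope.
Local Open Scope fset_scope.

Definition east : cell := (1, 0).
Definition south : cell := (0, -1).

Definition ray (d a b : cell) : Prop :=
  exists n : nat, b = (a.1 + n%:Z * d.1, a.2 + n%:Z * d.2)%R.

Fixpoint staircase (P : {fset cell}) (k : nat) (d d' a b : cell) : Prop :=
  match k with
  | 0%N => ray d a b
  | k.+1 => exists m : cell, [/\ m \in P, ray d a m & staircase P k d' d m b]
  end.

Lemma ray_refl (d a : cell) : ray d a a.
Proof. by exists 0%N; rewrite !mul0r !addr0 -surjective_pairing. Qed.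

Lemma ray_trans (d a b c : cell) : ray d a b -> ray d b c -> ray d a c.
Proof.
move=> [n ->] [m ->] /=; exists (n + m)%N.
by rewrite PoszD !mulrDl !addrA.
Qed.

Lemma ray_step (a b : cell) : ray (step a b) a b.
Proof. by exists 1%N; rewrite !mul1r !subrKC -surjective_pairing. Qed.

Lemma ray_east (a b : cell) : ray east a b -> b.2 = a.2 /\ a.1 <= b.1.
Proof. by move=> [n ->] /=; rewrite mulr0 mulr1 addr0 lerDl. Qed.

Lemma ray_south (a b : cell) : ray south a b -> b.1 = a.1 /\ b.2 <= a.2.
Proof. by move=> [n ->] /=; rewrite mulr0 addr0 mulrN1 gerBl. Qed.

Lemma staircase_of_ray (P : {fset cell}) k (d d' a b : cell) :
  b \in P -> ray d a b -> staircase P k d d' a b.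
Proof.
elim: k d d' a => [|k IH] d d' a bP hab //=.
by exists b; split => //; apply: IH => //; apply: ray_refl.
Qed.

Lemma staircase_ray_cons (P : {fset cell}) k (d d' a m b : cell) :
  ray d a m -> staircase P k d d' m b -> staircase P k d d' a b.
Proof.
case: k => [|k] /= ham; first exact: ray_trans.
by move=> [c [cP hmc hcb]]; exists c; split => //; apply: ray_trans hmc.
Qed.

Lemma nchanges_cons (u : cell) (s : seq cell) :
  nchanges (u :: s) = ((u != head u s) + nchanges s)%N.
Proof. by case: s => [|x s] /=; rewrite ?eqxx. Qed.

(* Each maximal run of equal steps is a ray, and the cell where the direction
   changes is a turning point. *)
Lemma staircase_of_steps (P : {fset cell}) k (d d' a : cell) p :
  all (fun c => c \in P) (a :: p) -> {subset steps a p <= [:: d; d']} ->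
  head d (steps a p) = d -> (nchanges (steps a p) <= k)%N ->
  staircase P k d d' a (last a p).
Proof.
elim: p a k d d' => [|x p IH] a k d d'.
  by move=> /andP [aP _] _ _ _; apply: staircase_of_ray aP (ray_refl _ _).
change (steps a (x :: p)) with (step a x :: steps x p).
move=> /andP [_ hp] hsub hhead; have {}hhead : step a x = d := hhead.
rewrite nchanges_cons hhead => hk.
have hax : ray d a x by rewrite -hhead; apply: ray_step.
have hsub' : {subset steps x p <= [:: d; d']}.
  by move=> s hs; apply: hsub; rewrite inE hs orbT.
have [hd | hd] := eqVneq (head d (steps x p)) d.
  rewrite hd eqxx add0n in hk.
  by apply: staircase_ray_cons hax _; apply: IH.
case: k hk => [|k]; rewrite eq_sym hd // add1n ltnS => hk.
case: (steps x p) hsub' hd hk (IH x k d' d) => [|s r]; first by rewrite /= eqxx.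
move=> hsub' /= hsd hk IHx.
have hsd' : s = d'.
  by move: (hsub' s (mem_head s r)); rewrite !inE (negbTE hsd) => /eqP.
exists x; split => //; first by case/andP: hp.
by apply: IHx => // c /hsub'; rewrite !inE orbC.
Qed.

Lemma adj_step_east (u v : cell) : adj u v -> u.1 < v.1 -> step u v = east.
Proof.
case: u v => [u1 u2] [v1 v2]; rewrite /adj /step /east /= => /eqP h lt.
congr pair; lia.
Qed.

Lemma adj_step_south (u v : cell) : adj u v -> v.2 < u.2 -> step u v = south.
Proof.
case: u v => [u1 u2] [v1 v2]; rewrite /adj /step /south /= => /eqP h lt.
congr pair; lia.
Qed.

Lemma mem_steps_east (a : cell) (p : seq cell) :
  path adj a p -> a.1 < (last a p).1 -> east \in steps a p.
Proof.
elim: p a => [|x p IH] a /=; first by rewrite ltxx.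
move=> /andP [hax hp] hlt; rewrite inE.
case: (ltP a.1 x.1) => hx; first by rewrite (adj_step_east hax hx) eqxx.
by rewrite IH ?orbT //; apply: le_lt_trans hlt.
Qed.

Lemma mem_steps_south (a : cell) (p : seq cell) :
  path adj a p -> (last a p).2 < a.2 -> south \in steps a p.
Proof.
elim: p a => [|x p IH] a /=; first by rewrite ltxx.
move=> /andP [hax hp] hlt; rewrite inE.
case: (ltP x.2 a.2) => hy; first by rewrite (adj_step_south hax hy) eqxx.
by rewrite IH ?orbT //; apply: lt_le_trans hy.
Qed.

Lemma subset_of_undup_size2 (T : eqType) (s : seq T) (x y : T) :
  (size (undup s) <= 2)%N -> x != y -> x \in s -> y \in s -> {subset s <= [:: x; y]}.
Proof.
move=> hsz hxy hx hy z hz; apply/negPn/negP; rewrite !inE negb_or => /andP [hzx hzy].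
have huniq : uniq [:: z; x; y] by rewrite /= !inE negb_or hzx hzy hxy.
have hsub : {subset [:: z; x; y] <= undup s}.
  by move=> w; rewrite !inE mem_undup => /or3P [] /eqP ->.
by have := uniq_leq_size huniq hsub; rewrite leqNgt (leq_ltn_trans hsz).
Qed.

Lemma monotone_steps_east_south (a : cell) (p : seq cell) :
  path adj a p -> monotone a p -> a.1 < (last a p).1 -> (last a p).2 < a.2 ->
  {subset steps a p <= [:: east; south]}.
Proof.
move=> hp hm hx hy; apply: subset_of_undup_size2 hm _ _ _ => //.
- exact: mem_steps_east.
- exact: mem_steps_south.
Qed.

Lemma staircase_ESE (P : {fset cell}) (xa ya xb yb : int) :
  staircase P 2 east south (xa, ya) (xb, yb) ->
  exists x : int, [/\ xa <= x <= xb, (x, ya) \in P & (x, yb) \in P].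
Proof.
move=> [m [mP /ray_east /= [m2 am1]
  [m' [m'P /ray_south [m'1 m'2] /ray_east /= [b2 m'b1]]]]].
exists m.1; split; first by apply/andP; split; lia.
- by rewrite -m2 -surjective_pairing.
- by rewrite b2 -m'1 -surjective_pairing.
Qed.

Lemma staircase_SES (P : {fset cell}) (xa ya xb yb : int) :
  staircase P 2 south east (xa, ya) (xb, yb) ->
  exists y : int, [/\ yb <= y <= ya, (xa, y) \in P & (xb, y) \in P].
Proof.
move=> [m [mP /ray_south /= [m1 am2]
  [m' [m'P /ray_east [m'2 m'1] /ray_south /= [b1 m'b2]]]]].
exists m.2; split; first by apply/andP; split; lia.
- by rewrite -m1 -surjective_pairing.
- by rewrite b1 -m'2 -surjective_pairing.
Qed.

Lemma Z_convex_SE_link (P : {fset cell}) (xa ya xb yb : int) :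
  Z_convex P -> (xa, ya) \in P -> (xb, yb) \in P -> xa < xb -> yb < ya ->
  (exists x : int, [/\ xa <= x <= xb, (x, ya) \in P & (x, yb) \in P]) \/
  (exists y : int, [/\ yb <= y <= ya, (xa, y) \in P & (xb, y) \in P]).
Proof.
move=> [_ hZ] aP bP hx hy.
have [p [[[hp hall hlast] _] hm hc]] := hZ _ _ aP bP.
have hES : {subset steps (xa, ya) p <= [:: east; south]}.
  by apply: monotone_steps_east_south; rewrite // hlast.
case: p hp hall hm hc hlast hES => [|c p].
  by move=> _ _ _ _ [exb _]; rewrite exb ltxx in hx.
move=> hp hall _ hc hlast hES.
have /hES := mem_head (step (xa, ya) c) (steps c p); rewrite !inE => /orP [] /eqP hd.
- have := @staircase_of_steps P 2 east south _ _ hall hES hd hc.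
  by rewrite hlast => /staircase_ESE; left.
- have hSE : {subset steps (xa, ya) (c :: p) <= [:: south; east]}.
    by move=> s /hES; rewrite !inE orbC.
  have := @staircase_of_steps P 2 south east _ _ hall hSE hd hc.
  by rewrite hlast => /staircase_SES; right.
Qed.

Lemma convex_row_mem (P : {fset cell}) (y x1 x2 x : int) : convex_polyomino P ->
  (x1, y) \in P -> (x2, y) \in P -> x1 <= x -> x <= x2 -> (x, y) \in P.
Proof. by move=> [_ [hrow _]] h1 h2 hx1 hx2; apply: hrow h1 h2 _; rewrite hx1. Qed.

Lemma convex_col_mem (P : {fset cell}) (x y1 y2 y : int) : convex_polyomino P ->
  (x, y1) \in P -> (x, y2) \in P -> y1 <= y -> y <= y2 -> (x, y) \in P.
Proof. by move=> [_ [_ hcol]] h1 h2 hy1 hy2; apply: hcol h1 h2 _; rewrite hy1. Qed.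

Section Descending.

Variables (P : {fset cell}) (xl xr yX yY xT : int).
Hypothesis hZ : Z_convex P.
Hypothesis hxl : forall c : cell, c \in P -> xl <= c.1.
Hypothesis hxr : forall c : cell, c \in P -> c.1 <= xr.
Hypothesis hxr_in : exists y : int, (xr, y) \in P.
Hypothesis hX_in : (xl, yX) \in P.
Hypothesis hY : forall y : int, (xl, y) \in P -> yY <= y.
Hypothesis hdesc : forall y : int, (xr, y) \in P -> y < yY.
Hypothesis hT_in : (xT, yY) \in P.
Hypothesis hT : forall x : int, (x, yY) \in P -> x <= xT.

Lemma right_of_T_below_Y (x y : int) : (x, y) \in P -> xT < x -> y < yY.
Proof.
move=> hxy hxT; have [hconv _] := hZ; have [yr hr] := hxr_in.
have hyr := hdesc hr; have hYX := hY hX_in; have hxlT : xl <= xT := hxl hT_in.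
have hxTr : xT < xr.
  rewrite lt_neqAle (hxr hT_in) andbT; apply/eqP => eT.
  by move: hT_in; rewrite eT => /hdesc; rewrite ltxx.
have hxxr : x <= xr := hxr hxy.
have [[x0 [_ hx0X hx0r]] | [q [_ /hY hq /hdesc]]] :=
  Z_convex_SE_link hZ hX_in hr (le_lt_trans hxlT hxTr) (lt_le_trans hyr hYX).
- have /hT hx0T : (x0, yY) \in P by apply: (convex_col_mem hconv hx0r hx0X); lia.
  have hxr' : (x, yr) \in P by apply: (convex_row_mem hconv hx0r hr); lia.
  rewrite ltNge; apply/negP => hyY.
  have /hT : (x, yY) \in P by apply: (convex_col_mem hconv hxr' hxy); lia.
  lia.
- lia.
Qed.

End Descending.

Theorem mainTheorem3 (P : {fset cell})
  (xl xr yX yY xS xT yS : int)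
  (* P is a non-centered Z-convex polyomino *)
  (hZ : Z_convex P) (hnc : ~ centered P)
  (* xl = index of the leftmost column c1, xr = index of the rightmost column *)
  (hxl : forall c, c \in P -> xl <= c.1) (hxl_in : exists y, (xl, y) \in P)
  (hxr : forall c, c \in P -> c.1 <= xr) (hxr_in : exists y, (xr, y) \in P)
  (* X = row of the top cell of c1, Y = row of the bottom cell of c1 *)
  (hX_in : (xl, yX) \in P) (hX : forall y, (xl, y) \in P -> y <= yX)
  (hY_in : (xl, yY) \in P) (hY : forall y, (xl, y) \in P -> yY <= y)
  (* descending: the rightmost column lies entirely below the row Y *)
  (hdesc : forall y, (xr, y) \in P -> y < yY)
  (* S = column of the rightmost cell of X, T = column of the rightmost cell of Y *)
  (hS_in : (xS, yX) \in P) (hS : forall x, (x, yX) \in P -> x <= xS)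
  (hT_in : (xT, yY) \in P) (hT : forall x, (x, yY) \in P -> x <= xT)
  (* yS = row of the lowest cell of P in column S *)
  (hyS_in : (xS, yS) \in P) (hyS : forall y, (xS, y) \in P -> yS <= y) :
  (* theta = cells of P strictly to the right of T: none is lower than yS *)
  forall c, c \in P -> xT < c.1 -> yS <= c.2.
Proof.
(* [hnc] is redundant: by [hY] and [hdesc], a row meeting both the leftmost and
   the rightmost column would lie both at or above Y and below Y. *)
have below_Y := right_of_T_below_Y hZ hxl hxr hxr_in hX_in hY hdesc hT_in hT.
move=> [x y] hc /= hxT; rewrite leNgt; apply/negP => hy.
have [hconv _] := hZ.
have hYX : yY <= yX := hX _ hY_in.
have hSX : yS <= yX := hyS _ hS_in.
have hxlT : xl <= xT := hxl _ hT_in.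
have [[x0 [_ /hS hx0S hx0y]] | [q [_ /hY hq /below_Y /(_ hxT) hqY]]] :=
  Z_convex_SE_link hZ hX_in hc (le_lt_trans hxlT hxT) (lt_le_trans hy hSX).
- case: (lerP xS x) => hSx.
    have /hyS : (xS, y) \in P by apply: (convex_row_mem hconv hx0y hc); lia.
    lia.
  have /below_Y /(_ hxT) : (x, yX) \in P.
    by apply: (convex_row_mem hconv hX_in hS_in); lia.
  lia.
- lia.
Qed.
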